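(* Let $n\ge 4$ and let $A=\{a_1,\dots,a_m\}$ with $a_1<a_2<\dots<a_m$, and let $s,t$ be any two distinct vertices of $QJ(n,A)$. (i) If $1\le a_1<\dots<a_m<n-1$, then for every $1\le i<m$ and any two distinct vertices $u,w$ of level $i$ (the copy of $J(n,a_i)$), there exist distinct vertices $u',w'$ of level $i+1$ (the copy of $J(n,a_{i+1})$), neither equal to $s$ or $t$, such that $u'$ is adjacent to $u$ and $w'$ is adjacent to $w$. (ii) If $1<a_1<\dots<a_m\le n-1$, then for every $1<i\le m$ and any two distinct vertices $u,w$ of level $i$, there exist distinct vertices $u',w'$ of level $i-1$, neither equal to $s$ or $t$, such that $u'$ is adjacent to $u$ and $w'$ is adjacent to $w$. (iii) If $A=\{1,n-1\}$, then any two distinct vertices of level 1 have distinct neighbours (respectively) in level 2 avoiding $\{s,t\}$, and any two distinct vertices of level 2 have distinct neighbours (respectively) in level 1 avoiding $\{s,t\}$.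
   Context: Let $[n]=\{1,\dots,n\}$. The Johnson graph $J(n,k)$ has as vertices the $k$-subsets of $[n]$, two being adjacent iff they share exactly $k-1$ elements. For a nonempty $A=\{a_1<a_2<\dots<a_m\}\subseteq[n]$, the graph $QJ(n,A)$ is formed by taking, for each $i$, a copy of $J(n,a_i)$ (called level $i$), and additionally joining a vertex $u$ of level $i$ to a vertex $v$ of level $i+1$ whenever $u\subseteq v$ (for $1\le i<m$); there are no other edges. *)

From mathcomp Require Import all_boot.
Set Implicit Arguments. Unset Strict Implicit. Unset Printing Implicit Defensive.

(* The ground set [n] = {1,...,n} is represented by 'I_n = {0,...,n-1}.
   A = {a_1 < ... < a_m} is represented by the strictly increasing
   sequence a = [:: a_1; ...; a_m]; level i (1-based in the paper) is
   index i-1 (0-based) here. *)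

Definition valid_A (n : nat) (a : seq nat) : bool :=
  [&& a != [::], sorted ltn a & all (fun x => (1 <= x) && (x <= n)) a].

Definition qj_vertex (n : nat) (a : seq nat) (v : nat * {set 'I_n}) : bool :=
  (v.1 < size a) && (#|v.2| == nth 0 a v.1).

Definition qj_adj (n : nat) (a : seq nat) (u v : nat * {set 'I_n}) : bool :=
  [&& qj_vertex a u, qj_vertex a v &
    [|| (u.1 == v.1) && (#|u.2 :&: v.2| == (nth 0 a u.1).-1),
        (v.1 == u.1.+1) && (u.2 \subset v.2)
      | (u.1 == v.1.+1) && (v.2 \subset u.2)]].

Definition distinct_nbrs_avoiding (n : nat) (a : seq nat)
    (s t : nat * {set 'I_n}) (i j : nat) : Prop :=
  forall u w : {set 'I_n},
    qj_vertex a (i, u) -> qj_vertex a (i, w) -> u != w ->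
    exists u' w' : {set 'I_n},
      [/\ qj_vertex a (j, u'), qj_vertex a (j, w'), u' != w',
          [/\ (j, u') != s, (j, u') != t, (j, w') != s & (j, w') != t]
        & qj_adj a (i, u) (j, u') /\ qj_adj a (i, w) (j, w')].

From mathcomp Require Import all_boot.
From mathcomp Require Import zify.
Set Implicit Arguments. Unset Strict Implicit. Unset Printing Implicit Defensive.

(* Moving from level i to an adjacent level amounts to choosing a subset (going
   down) or a superset (going up, dually by complementation) of prescribed size.
   The a_j-subsets of u form a family of size 'C(|u|, a_j) >= |u| >= 3, and
   distinct sets u != w give distinct families, since a set is the union of its
   k-subsets.  Two distinct families of size at least 3 always admit distinct
   representatives avoiding two forbidden sets: this is where s and t go. *)

Lemma distinct_reps_avoiding (T : finType) (X Y B : {set T}) :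
  #|B| < #|X| -> #|B| < #|Y| -> X != Y ->
  exists x y, [/\ x \in X :\: B, y \in Y :\: B & x != y].
Proof.
move=> BX BY neqXY.
have nonempty (Z : {set T}) : #|B| < #|Z| -> exists z, z \in Z :\: B.
  move=> BZ; apply/card_gt0P; rewrite cardsD.
  by have := subset_leq_card (subsetIr Z B); lia.
have [x xX] := nonempty X BX.
have [Ysub | /subsetPn [y yY yx]] := boolP (Y :\: B \subset [set x]); last first.
  by exists x, y; rewrite xX yY eq_sym; move: yx; rewrite inE.
have [y yY] := nonempty Y BY.
have yx : y = x by apply/set1P/(subsetP Ysub).
have [Xsub | /subsetPn [x' x'X x'x]] := boolP (X :\: B \subset [set x]); last first.
  by exists x', y; rewrite x'X yY yx; move: x'x; rewrite inE.
have tight (Z : {set T}) : Z :\: B \subset [set x] -> #|B| < #|Z| -> Z = B :|: [set x].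
  move=> Zsub BZ; apply/eqP; rewrite eqEcard -subDset Zsub cardsU cards1.
  by rewrite /= (leq_trans (leq_subr _ _)) // addn1.
by case/negP: neqXY; rewrite (tight X Xsub BX) (tight Y Ysub BY).
Qed.

Lemma leq_bin (n k : nat) : 0 < k < n -> n <= 'C(n, k).
Proof.
elim: n k => [|n IHn] [|k] // /andP [_ ltkn].
have [k1n | ltnk1 | <-] := ltngtP k.+1 n; [| by lia | by rewrite binSn].
have := IHn k.+1 k1n; have : 0 < 'C(n, k) by rewrite bin_gt0 ltnW.
by rewrite binS; lia.
Qed.

Lemma cover_draws (T : finType) (u : {set T}) (k : nat) :
  0 < k <= #|u| -> cover [set A : {set T} | A \subset u & #|A| == k] = u.
Proof.
move=> /andP [k0 ku]; apply/eqP; rewrite eqEsubset; apply/andP; split.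
  by apply/bigcupsP => A; rewrite inE => /andP [].
apply/subsetP => x xu.
have [B] : exists B, B \in [set B : {set T} | B \subset u :\ x & #|B| == k.-1].
  by apply/card_gt0P; rewrite cards_draws bin_gt0; move: (cardsD1 x u); rewrite xu; lia.
rewrite inE => /andP [Bu /eqP cardB].
have xB : x \notin B by apply: contraTN Bu => xB; apply/subsetPn; exists x; rewrite ?inE ?eqxx.
apply/bigcupP; exists (x |: B); last by rewrite setU11.
rewrite inE cardsU1 xB cardB add1n prednK // eqxx andbT subUset sub1set xu.
exact: subset_trans Bu (subD1set u x).
Qed.

Lemma distinct_subsets_avoiding (T : finType) (u w b1 b2 : {set T}) (k : nat) :
  #|u| = #|w| -> u != w -> 0 < k < #|u| -> 3 <= #|u| ->
  exists u' w' : {set T},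
    [/\ u' \subset u, w' \subset w, #|u'| = k, #|w'| = k &
        [/\ u' != w', u' != b1, u' != b2, w' != b1 & w' != b2]].
Proof.
move=> cardw neqw /andP [k0 ku] u3.
pose draws (z : {set T}) := [set A : {set T} | A \subset z & #|A| == k].
have draws_ge3 (z : {set T}) : #|z| = #|u| -> 3 <= #|draws z|.
  by move=> cardz; rewrite cards_draws cardz (leq_trans u3) // leq_bin ?k0.
have neq_draws : draws u != draws w.
  have ku' : 0 < k <= #|u| by rewrite k0 ltnW.
  have kw : 0 < k <= #|w| by rewrite -cardw.
  apply: contra_neq neqw => eqd.
  by rewrite -(cover_draws ku') -/(draws u) eqd cover_draws.
have card_b : #|[set b1; b2]| < 3 by rewrite cards2; case: (b1 != b2).
have [u' [w' []]] := distinct_reps_avoiding (leq_trans card_b (draws_ge3 u erefl))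
  (leq_trans card_b (draws_ge3 w (esym cardw))) neq_draws.
rewrite !inE !negb_or => /and3P [/andP [ub1 ub2] uu' /eqP cardu'].
move=> /and3P [/andP [wb1 wb2] ww' /eqP cardw'] neq'.
by exists u', w'.
Qed.

Lemma distinct_supersets_avoiding (T : finType) (u w b1 b2 : {set T}) (k : nat) :
  #|u| = #|w| -> u != w -> #|u| < k < #|T| -> 3 <= #|T| - #|u| ->
  exists u' w' : {set T},
    [/\ u \subset u', w \subset w', #|u'| = k, #|w'| = k &
        [/\ u' != w', u' != b1, u' != b2, w' != b1 & w' != b2]].
Proof.
move=> cardw neqw /andP [uk kT] u3.
have cardCu := cardsC u; have cardCw := cardsC w.
have [||||u' [w' [su sw cardu' cardw' [neq' ub1 ub2 wb1 wb2]]]] :=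
  @distinct_subsets_avoiding T (~: u) (~: w) (~: b1) (~: b2) (#|T| - k).
- by lia.
- by rewrite (inj_eq (@setC_inj T)).
- by lia.
- by lia.
have neqC (A B : {set T}) : A != ~: B -> ~: A != B.
  by apply: contra_neq => <-; rewrite setCK.
exists (~: u'), (~: w'); split; rewrite 1?subsetC //.
- by have := cardsC u'; lia.
- by have := cardsC w'; lia.
by split; rewrite ?(inj_eq (@setC_inj T)) ?neqC.
Qed.

Lemma neq_pair_snd (A B : eqType) (x : A) (y : B) (z : A * B) :
  y != z.2 -> (x, y) != z.
Proof. by apply: contra_neq => <-. Qed.

Section LevelNeighbours.

Variables (n : nat) (a : seq nat) (s t : nat * {set 'I_n}).

Lemma qj_adj_up i (u u' : {set 'I_n}) :
  qj_vertex a (i, u) -> qj_vertex a (i.+1, u') -> u \subset u' ->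
  qj_adj a (i, u) (i.+1, u').
Proof. by move=> vu vu' su; rewrite /qj_adj vu vu' /= eqxx su orbT. Qed.

Lemma qj_adj_down i (u u' : {set 'I_n}) :
  qj_vertex a (i.+1, u) -> qj_vertex a (i, u') -> u' \subset u ->
  qj_adj a (i.+1, u) (i, u').
Proof. by move=> vu vu' su; rewrite /qj_adj vu vu' /= eqxx su !orbT. Qed.

Lemma distinct_nbrs_avoiding_up i :
  i.+1 < size a -> nth 0 a i < nth 0 a i.+1 < n -> 3 <= n - nth 0 a i ->
  distinct_nbrs_avoiding a s t i i.+1.
Proof.
move=> lt_size bounds gap u w /andP [_ /eqP cardu] /andP [_ /eqP cardw] neq_uw.
rewrite /= in cardu cardw.
have [||u' [w' [su sw cardu' cardw' [neq' us ut ws wt]]]] :=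
  @distinct_supersets_avoiding _ u w s.2 t.2 (nth 0 a i.+1) (etrans cardu (esym cardw)) neq_uw.
- by rewrite card_ord cardu.
- by rewrite card_ord cardu.
have vu' : qj_vertex a (i.+1, u') by rewrite /qj_vertex lt_size cardu' /=.
have vw' : qj_vertex a (i.+1, w') by rewrite /qj_vertex lt_size cardw' /=.
have vu : qj_vertex a (i, u) by rewrite /qj_vertex ltnW // cardu /=.
have vw : qj_vertex a (i, w) by rewrite /qj_vertex ltnW // cardw /=.
exists u', w'; split; rewrite ?qj_adj_up //.
by split; apply: neq_pair_snd.
Qed.

Lemma distinct_nbrs_avoiding_down i :
  i.+1 < size a -> 0 < nth 0 a i < nth 0 a i.+1 -> 3 <= nth 0 a i.+1 ->
  distinct_nbrs_avoiding a s t i.+1 i.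
Proof.
move=> lt_size bounds big u w /andP [_ /eqP cardu] /andP [_ /eqP cardw] neq_uw.
rewrite /= in cardu cardw.
have [||u' [w' [su sw cardu' cardw' [neq' us ut ws wt]]]] :=
  @distinct_subsets_avoiding _ u w s.2 t.2 (nth 0 a i) (etrans cardu (esym cardw)) neq_uw.
- by rewrite cardu.
- by rewrite cardu.
have vu' : qj_vertex a (i, u') by rewrite /qj_vertex ltnW // cardu' /=.
have vw' : qj_vertex a (i, w') by rewrite /qj_vertex ltnW // cardw' /=.
have vu : qj_vertex a (i.+1, u) by rewrite /qj_vertex lt_size cardu /=.
have vw : qj_vertex a (i.+1, w) by rewrite /qj_vertex lt_size cardw /=.
exists u', w'; split; rewrite ?qj_adj_down //.
by split; apply: neq_pair_snd.
Qed.

End LevelNeighbours.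

Theorem lemma5 (n : nat) (a : seq nat) (s t : nat * {set 'I_n}) :
  4 <= n -> valid_A n a ->
  qj_vertex a s -> qj_vertex a t -> s != t ->
  [/\ (all (fun x => (1 <= x) && (x < n - 1)) a ->
         forall i, i.+1 < size a -> distinct_nbrs_avoiding a s t i i.+1),
      (all (fun x => (1 < x) && (x <= n - 1)) a ->
         forall i, 0 < i < size a -> distinct_nbrs_avoiding a s t i i.-1)
    & (a = [:: 1; n - 1] ->
         distinct_nbrs_avoiding a s t 0 1 /\ distinct_nbrs_avoiding a s t 1 0)].
Proof.
move=> n4 /and3P [_ sorted_a _] _ _ _.
have lt_nth i : i.+1 < size a -> nth 0 a i < nth 0 a i.+1.
  by move=> lt_size; rewrite (sorted_ltn_nth ltn_trans 0 sorted_a) ?inE // ltnW.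
have all_nth (P : pred nat) i : all P a -> i < size a -> P (nth 0 a i).
  by move=> allP_a lt_size; apply: (allP allP_a); apply: mem_nth.
split.
- move=> bounds i lt_size.
  have := lt_nth i lt_size; have /andP [_ ?] := all_nth _ i.+1 bounds lt_size.
  by move=> ?; apply: distinct_nbrs_avoiding_up => //; lia.
- move=> bounds [|i] // /andP [_ lt_size].
  have := lt_nth i lt_size; have /andP [? _] := all_nth _ i bounds (ltnW lt_size).
  by move=> ?; apply: distinct_nbrs_avoiding_down => //; lia.
move=> ->; split.
- by apply: distinct_nbrs_avoiding_up => //=; lia.
- by apply: distinct_nbrs_avoiding_down => //=; lia.
Qed.
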